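(* Let $P,Q$ be fixed probability distributions on $\mathbb{R}$ (not depending on $n$) such that $Q$ is absolutely continuous with respect to $P$, and let $k=k_n\in\{2,\dots,n\}$ be a sequence. If $R(T^* )\to 0$ as $n\to\infty$, then $k_n\to\infty$.
   Context: Weighted hidden clique model. For $n\ge 2$ and $k\in\{2,\dots,n\}$, let $E=\{(i,j):1\le i<j\le n\}$ and for $S\subseteq[n]$ let $E(S)=\{(i,j):i,j\in S,\ i<j\}$. The observation is $\mathbf{X}=(X_e)_{e\in E}$. Under $\mathcal{H}_0$ (law $\mathbb{P}_0$) the $X_e$ are i.i.d. $P$. Under $\mathcal{H}_1$ (law $\mathbb{P}_1$) a uniformly random $k$-subset $S^*\subseteq[n]$ is chosen and, conditionally on $S^*$, the $X_e$ are independent with $X_e\sim Q$ for $e\in E(S^* )$ and $X_e\sim P$ otherwise. The risk of a test $T:\mathbb{R}^{\binom n2}\to\{0,1\}$ is $R(T)=\mathbb{P}_0(T=1)+\mathbb{P}_1(T=0)$, and $R(T^* )=\inf_T R(T)$ is the optimal risk (attained by the likelihood ratio test $T^*$). *)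

From HB Require Import structures.
From mathcomp Require Import all_boot all_order all_algebra.
From mathcomp Require Import all_classical all_reals all_analysis.
Import Order.TTheory GRing.Theory Num.Theory.

Set Implicit Arguments.
Unset Strict Implicit.
Unset Printing Implicit Defensive.

Local Open Scope classical_set_scope.
Local Open Scope ring_scope.

Definition Edge (n : nat) := {e : 'I_n * 'I_n | (e.1 < e.2)%N}.

(* Observation space R^E, realised as the tuple space R^{|E|} equipped with
   the product sigma-algebra (the library's measurable structure on tuples);
   coordinate X_e is the (enum_rank e)-th entry. *)
Definition Obs (R : realType) (n : nat) := (#|{: Edge n}|).-tuple R.

Definition coord (R : realType) (n : nat) (x : Obs R n) (e : Edge n) : R :=
  tnth x (enum_rank e).

Definition in_clique (n : nat) (S : {set 'I_n}) (e : Edge n) : bool :=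
  ((sval e).1 \in S) && ((sval e).2 \in S).

(* mu is the product law of the independent coordinates X_e ~ law e:
   its value on every measurable rectangle is the product of the marginals
   (this determines mu uniquely on the product sigma-algebra). *)
Definition is_product_law (R : realType) (n : nat)
  (mu : set (Obs R n) -> \bar R) (law : Edge n -> set R -> \bar R) : Prop :=
  forall A : Edge n -> set R, (forall e, measurable (A e)) ->
    mu [set x | forall e, A e (coord x e)] = (\prod_(e : Edge n) law e (A e))%E.

Definition H1_law (R : realType) (n k : nat)
  (muS : {set 'I_n} -> set (Obs R n) -> \bar R) (A : set (Obs R n)) : \bar R :=
  ((('C(n, k))%:R)^-1%:E * \sum_(S : {set 'I_n} | #|S| == k) muS S A)%E.

(* Risk of a test T : Obs -> {0,1} (true = reject H0 / declare H1). *)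
Definition risk (R : realType) (n k : nat) (mu0 : set (Obs R n) -> \bar R)
  (muS : {set 'I_n} -> set (Obs R n) -> \bar R) (T : Obs R n -> bool) : \bar R :=
  (mu0 (T @^-1` [set true]) + H1_law k muS (T @^-1` [set false]))%E.

Definition opt_risk (R : realType) (n k : nat) (mu0 : set (Obs R n) -> \bar R)
  (muS : {set 'I_n} -> set (Obs R n) -> \bar R) : \bar R :=
  ereal_inf [set r | exists T : Obs R n -> bool,
                 measurable_fun [set: Obs R n] T /\ r = risk k mu0 muS T].

From Pilot Require Import Defs.
From HB Require Import structures.
From mathcomp Require Import all_boot all_order all_algebra.
From mathcomp Require Import all_classical all_reals all_analysis.
From mathcomp Require Import measurable_realfun lra.
Import Order.TTheory GRing.Theory Num.Theory.

(* If k_n < M, the planted clique touches at most M^2 of the coordinates.  Since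
   Q << P, for every e > 0 there is K with Q(A) <= e + K P(A) for all A; this
   affine domination survives products (bound the sections, then Fubini) and
   pushforwards, so it holds between Q^m and P^m for m <= M^2 and, after
   integrating out the unplanted coordinates, between every planted law P_S and
   the null law P_0, with K depending on M only.  For e = 1/4 a rejection region
   A then has either P_0(A) >= 1/(4(K+1)) or P_S(A^c) >= 1/2 for all S, so the
   optimal risk stays above 1/(4(K+1)) while k_n < M. *)

Local Open Scope classical_set_scope.
Local Open Scope ring_scope.

Section affine_domination.
Context {d} {T : measurableType d} {R : realType}.
Implicit Types mu nu : set T -> \bar R.

Definition affinely_dominates mu nu (e K : R) :=
  forall A, measurable A -> (nu A <= e%:E + K%:E * mu A)%E.

Definition eps_dominates mu nu :=
  forall e : R, 0 < e -> exists2 K : R, 0 <= K & affinely_dominates mu nu e K.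

Local Open Scope ereal_scope.

Lemma affinely_dominatesW (mu : {measure set T -> \bar R}) nu (e K K' : R) :
  (K <= K')%R -> affinely_dominates mu nu e K -> affinely_dominates mu nu e K'.
Proof.
move=> KK' muK A mA; apply: (le_trans (muK A mA)).
by rewrite leeD2l// lee_wpmul2r// lee_fin.
Qed.

Lemma eps_dominates_refl (mu : {measure set T -> \bar R}) : eps_dominates mu mu.
Proof. by move=> e e_gt0; exists 1%R => // A mA; rewrite mul1e leeDr// lee_fin ltW. Qed.

Lemma eps_dominates_trans (mu1 mu2 : {measure set T -> \bar R}) nu :
  eps_dominates mu1 mu2 -> eps_dominates mu2 nu -> eps_dominates mu1 nu.
Proof.
move=> mu12 mu2nu e e_gt0.
have [K2 K2_ge0 nuK2] := mu2nu (e / 2)%R (divr_gt0 e_gt0 (ltr0Sn _ 1)).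
have e'_gt0 : (0 < e / 2 / (K2 + 1))%R by rewrite !divr_gt0// ltr_wpDl.
have [K1 K1_ge0 mu2K1] := mu12 _ e'_gt0.
exists (K2 * K1)%R; first exact: mulr_ge0.
move=> A mA; apply: (le_trans (nuK2 A mA)).
have K2E_ge0 : 0 <= K2%:E by rewrite lee_fin.
apply: (le_trans (leeD (lexx _) (lee_wpmul2l K2E_ge0 (mu2K1 A mA)))).
rewrite ge0_muleDr ?mule_ge0 ?lee_fin ?(ltW e'_gt0)//.
rewrite muleA -EFinM addeA -EFinD leeD2r// lee_fin [leRHS](splitr e) lerD2l.
rewrite mulrA ler_pdivrMr ?ltr_wpDl// mulrC ler_wpM2l ?lerDl//.
by rewrite divr_ge0// ltW.
Qed.

(* Absolute continuity in epsilon-delta form comes from the total variation of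
   Q regarded as a charge; the delta then gives K = 1 / delta. *)
Lemma dominates_eps_dominates (mu : {measure set T -> \bar R})
    (Q : probability T R) :
  Q `<< mu -> eps_dominates mu Q.
Proof.
move=> Qmu e e_gt0.
have [Pos [Neg QPN]] := Hahn_decomposition (charge_of_finite_measure Q).
have [dl [dl_gt0 Qdl]] := charge_variation_continuous QPN Qmu e_gt0.
exists dl^-1%R; first by rewrite invr_ge0 ltW.
move=> A mA; have [muA_lt|muA_ge] := ltP (mu A) dl%:E.
  apply: (le_trans (le_trans (lee_abs _) (abse_charge_variation QPN mA))).
  apply: (le_trans (ltW (Qdl A mA muA_lt))).
  by rewrite leeDl// mule_ge0// lee_fin invr_ge0 ltW.
apply: (le_trans (probability_le1 Q mA)); apply: (le_trans _ (leeDr _ _)).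
  by rewrite -(mulVf (lt0r_neq0 dl_gt0)) EFinM lee_pmul2l ?lte_fin ?invr_gt0.
by rewrite lee_fin ltW.
Qed.

End affine_domination.

Section pushforward_domination.
Context {d d'} {T : measurableType d} {T' : measurableType d'} {R : realType}.
Variables (mu nu : {measure set T -> \bar R}) (f : T -> T').
Hypothesis mf : measurable_fun setT f.

Lemma affinely_dominates_pushforward (e K : R) :
  affinely_dominates mu nu e K ->
  affinely_dominates (pushforward mu f) (pushforward nu f) e K.
Proof. by move=> muK A mA; apply: muK; rewrite -[_ @^-1` _]setTI; exact: mf. Qed.

Lemma eps_dominates_pushforward :
  eps_dominates mu nu -> eps_dominates (pushforward mu f) (pushforward nu f).
Proof.
move=> munu e e_gt0; have [K K_ge0 munuK] := munu e e_gt0.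
by exists K => //; exact: affinely_dominates_pushforward.
Qed.

End pushforward_domination.

Lemma le_integral_affine {d} {T : measurableType d} {R : realType}
    (mu : probability T R) (f g : T -> \bar R) (e K : R) :
  0 <= e -> 0 <= K -> measurable_fun setT f -> measurable_fun setT g ->
  (forall x, 0 <= f x)%E -> (forall x, 0 <= g x)%E ->
  (forall x, f x <= e%:E + K%:E * g x)%E ->
  (\int[mu]_x f x <= e%:E + K%:E * \int[mu]_x g x)%E.
Proof.
move=> e_ge0 K_ge0 mf mg f_ge0 g_ge0 fg.
have KE_ge0 : (0 <= K%:E)%E by rewrite lee_fin.
apply: (le_trans (ge0_le_integral _ _ _ _ _ (fun x _ => fg x))) => //.
  by apply: emeasurable_funD => //; exact: emeasurable_funM.
rewrite ge0_integralD//; last 2 first.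
- by move=> x _; rewrite mule_ge0.
- exact: emeasurable_funM.
have muT : (mu : {measure set T -> \bar R}) setT = 1%E := probability_setT mu.
by rewrite integral_cst// muT mule1 ge0_integralZl.
Qed.

Section product_domination.
Context {d1 d2} {T1 : measurableType d1} {T2 : measurableType d2} {R : realType}.
Local Open Scope ereal_scope.

Lemma product_measure1_swap (m1 : {sigma_finite_measure set T1 -> \bar R})
    (m2 : {sigma_finite_measure set T2 -> \bar R}) C :
  measurable C -> (m1 \x m2) C = (m1 \x^ m2) C.
Proof. by apply: product_measure_unique => A B mA mB; exact: product_measure2E. Qed.

Lemma affinely_dominates_prodr (mu : probability T1 R) (P Q : probability T2 R)
    (e K : R) :
  (0 <= e)%R -> (0 <= K)%R -> affinely_dominates P Q e K ->
  affinely_dominates (mu \x P) (mu \x Q) e K.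
Proof.
move=> e_ge0 K_ge0 PQ C mC; apply: le_integral_affine => //.
- exact: measurable_fun_xsection.
- exact: measurable_fun_xsection.
- by move=> x; apply: PQ; exact: measurable_xsection.
Qed.

Lemma affinely_dominates_prodl (P Q : probability T1 R) (nu : probability T2 R)
    (e K : R) :
  (0 <= e)%R -> (0 <= K)%R -> affinely_dominates P Q e K ->
  affinely_dominates (P \x nu) (Q \x nu) e K.
Proof.
move=> e_ge0 K_ge0 PQ C mC; rewrite !product_measure1_swap//.
apply: le_integral_affine => //.
- exact: measurable_fun_ysection.
- exact: measurable_fun_ysection.
- by move=> y; apply: PQ; exact: measurable_ysection.
Qed.

Lemma eps_dominates_prod (P1 Q1 : probability T1 R) (P2 Q2 : probability T2 R) :
  eps_dominates P1 Q1 -> eps_dominates P2 Q2 ->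
  eps_dominates (P1 \x P2) (Q1 \x Q2).
Proof.
move=> PQ1 PQ2; apply: (@eps_dominates_trans _ _ _ _ (Q1 \x P2)).
  move=> e e_gt0; have [K K_ge0 PQK] := PQ1 e e_gt0.
  by exists K => //; apply: affinely_dominates_prodl => //; exact: ltW.
move=> e e_gt0; have [K K_ge0 PQK] := PQ2 e e_gt0.
by exists K => //; apply: affinely_dominates_prodr => //; exact: ltW.
Qed.

End product_domination.

Section tuple_product.
Context {d} {T : measurableType d} {R : realType}.

Definition rect {N} (A : 'I_N -> set T) : set (N.-tuple T) :=
  [set u | forall i, A i (tnth u i)].

Definition is_tuple_product_law {N} (mu : set (N.-tuple T) -> \bar R)
    (L : 'I_N -> set T -> \bar R) :=
  forall A, (forall i, measurable (A i)) -> mu (rect A) = (\prod_(i < N) L i (A i))%E.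

Lemma measurable_rect N (A : 'I_N -> set T) :
  (forall i, measurable (A i)) -> measurable (rect A).
Proof.
move=> mA.
have -> : rect A = \bigcap_(i in [set: 'I_N]) ((@tnth N T ^~ i) @^-1` A i).
  by apply/seteqP; split => u /= uA i; [move=> _|]; exact: uA.
apply: fin_bigcap_measurable; first exact: finite_finset.
by move=> i _; rewrite -[X in measurable X]setTI; exact: measurable_tnth.
Qed.

Lemma rectT N : rect (fun _ : 'I_N => [set: T]) = setT.
Proof. by apply/seteqP; split. Qed.

Lemma is_tuple_product_law_setT {N} {mu : set (N.-tuple T) -> \bar R} {L} :
  is_tuple_product_law mu L -> (forall i, L i setT = 1%E) -> mu setT = 1%E.
Proof. by move=> muL L1; rewrite -rectT muL// big1. Qed.

Definition cons_tuple m (p : T * m.-tuple T) : m.+1.-tuple T :=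
  [tuple of p.1 :: p.2].

Lemma measurable_cons_tuple m : measurable_fun setT (cons_tuple m).
Proof. exact: measurable_cons. Qed.

HB.instance Definition _ m :=
  isMeasurableFun.Build _ _ _ _ (cons_tuple m) (measurable_cons_tuple m).

Lemma cons_tuple_rect m (A : 'I_m.+1 -> set T) :
  cons_tuple m @^-1` rect A = A ord0 `*` rect (fun j => A (lift ord0 j)).
Proof.
apply/seteqP; split => [[x u] /= xuA|[x u] [/= xA uA] i].
  by split => [|j]; [exact: (xuA ord0)|have := xuA (lift ord0 j); rewrite tnthS].
by case: (unliftP ord0 i) => [j ->|->]; [rewrite tnthS; exact: uA|exact: xA].
Qed.

Fixpoint tuple_prob (P : probability T R) m : probability (m.-tuple T) R :=
  match m return probability (m.-tuple T) R with
  | 0 => \d_[tuple]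
  | m'.+1 => distribution (P \x tuple_prob P m')%E (cons_tuple m')
  end.

Local Open Scope ereal_scope.

Lemma tuple_prob_law (P : probability T R) m :
  is_tuple_product_law (tuple_prob P m) (fun=> P).
Proof.
elim: m => [A _|m IH A mA].
  by rewrite big_ord0 /= diracE mem_set// => -[].
transitivity ((P \x tuple_prob P m) (cons_tuple m @^-1` rect A)) => //.
rewrite cons_tuple_rect product_measure1E//.
- by rewrite big_ord_recl; congr (_ * _); exact: IH.
- exact: measurable_rect.
Qed.

Lemma eps_dominates_tuple_prob {P Q : probability T R} m :
  eps_dominates P Q -> eps_dominates (tuple_prob P m) (tuple_prob Q m).
Proof.
move=> PQ; elim: m => [|m IH]; first exact: eps_dominates_refl.
apply: eps_dominates_pushforward; first exact: measurable_cons_tuple.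
exact: eps_dominates_prod.
Qed.

Lemma uniform_affinely_dominates_tuple_prob (P Q : probability T R) (e : R) B :
  eps_dominates P Q -> (0 < e)%R ->
  exists2 K : R, (0 <= K)%R & forall m, (m <= B)%N ->
    affinely_dominates (tuple_prob P m) (tuple_prob Q m) e K.
Proof.
move=> PQ e_gt0; elim: B => [|B [K1 K1_ge0 PQK1]].
  have [K K_ge0 PQK] := eps_dominates_tuple_prob 0 PQ e e_gt0.
  by exists K => // m; rewrite leqn0 => /eqP ->.
have [K2 K2_ge0 PQK2] := eps_dominates_tuple_prob B.+1 PQ e e_gt0.
exists (Num.max K1 K2) => [|m]; first by rewrite le_max K1_ge0.
rewrite leq_eqVlt ltnS => /orP[/eqP ->|mB].
  by apply: affinely_dominatesW PQK2; rewrite le_max lexx orbT.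
by apply: affinely_dominatesW (PQK1 m mB); rewrite le_max lexx.
Qed.

End tuple_product.

Section rect_measure_unique.
Context {d} {T : measurableType d} {R : realType} {N : nat}.

Definition rect_system : set (set (N.-tuple T)) :=
  [set rect A | A in [set A | forall i, measurable (A i)]].

Lemma measurable_rect_system : measurable = <<s rect_system >>.
Proof.
apply/seteqP; split; last first.
  apply: smallest_sub; first exact: sigma_algebra_measurable.
  by move=> _ [A mA <-]; exact: measurable_rect.
apply: smallest_sub; first exact: smallest_sigma_algebra.
rewrite -bigcup_pred => _ [i _ [B mB <-]]; apply: sub_sigma_algebra.
exists (fun j => if j == i then B else setT); first by move=> j; case: ifP.
apply/seteqP; split => u /=.
  by move=> uB; split => //; have := uB i; rewrite eqxx.
by move=> [_ uB] j; case: ifPn => // /eqP ->.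
Qed.

Lemma setI_closed_rect_system : setI_closed rect_system.
Proof.
move=> _ _ [A mA <-] [B mB <-]; exists (fun i => A i `&` B i).
  by move=> i; exact: measurableI.
apply/seteqP; split => u /= uAB; first by split => i; have [] := uAB i.
by move=> i; have [] := uAB.
Qed.

Lemma rect_measure_unique (mu nu : {measure set (N.-tuple T) -> \bar R}) :
  (mu setT < +oo)%E ->
  (forall A, (forall i, measurable (A i)) -> mu (rect A) = nu (rect A)) ->
  forall X, measurable X -> mu X = nu X.
Proof.
move=> muT_fin mu_nu; apply: (measure_unique _ (fun=> setT)).
- exact: measurable_rect_system.
- exact: setI_closed_rect_system.
- by move=> _; exists (fun=> setT); rewrite ?rectT.
- exact: bigcup_const.
- by move=> _ [A mA <-]; exact: mu_nu.
- by [].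
Qed.

End rect_measure_unique.

Section merge_on.
Context {d} {T : measurableType d} {R : realType} {N : nat} (F : {set 'I_N}).

Definition merge_on (p : N.-tuple T * #|F|.-tuple T) : N.-tuple T :=
  [tuple if i \in F then nth point p.2 (index i (enum F)) else tnth p.1 i | i < N].

Lemma tnth_merge_on_enum_val p (j : 'I_#|F|) :
  tnth (merge_on p) (enum_val j) = tnth p.2 j.
Proof.
rewrite tnth_mktuple enum_valP (tnth_nth point).
by rewrite (enum_val_nth (enum_val j)) index_uniq ?enum_uniq// -cardE.
Qed.

Lemma measurable_merge_on : measurable_fun setT merge_on.
Proof.
apply/measurable_fun_tnthP => i; have [iF|iNF] := boolP (i \in F).
  rewrite (_ : _ \o _ = fun p => tnth p.2 (enum_rank_in iF i)).
    exact: measurableT_comp (measurable_tnth _) measurable_snd.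
  apply/funext => p /=.
  by rewrite -[in LHS](enum_rankK_in iF iF) tnth_merge_on_enum_val.
rewrite (_ : _ \o _ = fun p => tnth p.1 i).
  exact: measurableT_comp (measurable_tnth i) measurable_fst.
by apply/funext => p /=; rewrite tnth_mktuple (negbTE iNF).
Qed.

HB.instance Definition _ :=
  isMeasurableFun.Build _ _ _ _ merge_on measurable_merge_on.

Lemma merge_on_rect (A : 'I_N -> set T) :
  merge_on @^-1` rect A = rect (fun i => if i \in F then setT else A i) `*`
                          rect (fun j => A (enum_val j)).
Proof.
apply/seteqP; split => [[u v] /= uvA|[u v] [/= uA vA] i].
  split => [i|j]; last by have := uvA (enum_val j); rewrite tnth_merge_on_enum_val.
  by case: ifPn => // iNF; have := uvA i; rewrite tnth_mktuple (negbTE iNF).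
have [iF|iNF] := boolP (i \in F).
  by rewrite -(enum_rankK_in iF iF) tnth_merge_on_enum_val; exact: vA.
by have := uA i; rewrite (negbTE iNF) tnth_mktuple (negbTE iNF).
Qed.

Local Open Scope ereal_scope.

Lemma merge_on_law (P Q : probability T R) :
  is_tuple_product_law
    (distribution (tuple_prob P N \x tuple_prob Q #|F|) merge_on)
    (fun i => if i \in F then Q else P).
Proof.
move=> A mA.
transitivity ((tuple_prob P N \x tuple_prob Q #|F|) (merge_on @^-1` rect A)) => //.
rewrite merge_on_rect product_measure1E; last 2 first.
- by apply: measurable_rect => i; case: ifP.
- exact: measurable_rect.
transitivity ((\prod_(i < N) P (if i \in F then setT else A i)) *
              \prod_(j < #|F|) Q (A (enum_val j))).
  by congr (_ * _); apply: tuple_prob_law => // i; case: ifP.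
rewrite [RHS](bigID (mem F)) muleC /=; congr (_ * _).
  by rewrite [RHS]big_enum_val; apply: eq_bigr => j _; rewrite enum_valP.
rewrite [RHS]big_mkcond /=; apply: eq_bigr => i _.
by case: ifP => _; rewrite ?probability_setT.
Qed.

Lemma planted_law_merge_on {P Q : probability T R}
    {mu : {measure set (N.-tuple T) -> \bar R}} :
  is_tuple_product_law mu (fun i => if i \in F then Q else P) ->
  forall X, measurable X ->
    mu X = distribution (tuple_prob P N \x tuple_prob Q #|F|) merge_on X.
Proof.
move=> muL; apply: rect_measure_unique => [|A mA]; last first.
  by rewrite muL//; symmetry; exact: merge_on_law.
rewrite (is_tuple_product_law_setT muL) ?ltry// => i.
by case: ifP => _; rewrite probability_setT.
Qed.

(* The planted law is the image of P^N x Q^|F| and the null law that of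
   P^N x P^|F| under the same map, so the bound passes from the |F| planted
   coordinates to the whole tuple with the same constants. *)
Lemma affinely_dominates_planted (P Q : probability T R)
    (mu0 muF : {measure set (N.-tuple T) -> \bar R}) (e K : R) :
  (0 <= e)%R -> (0 <= K)%R ->
  is_tuple_product_law mu0 (fun=> P) ->
  is_tuple_product_law muF (fun i => if i \in F then Q else P) ->
  affinely_dominates (tuple_prob P #|F|) (tuple_prob Q #|F|) e K ->
  affinely_dominates mu0 muF e K.
Proof.
move=> e_ge0 K_ge0 mu0P muFQ PQ A mA.
have mu0P' : is_tuple_product_law mu0 (fun i => if i \in F then P else P).
  by move=> B mB; under eq_bigr do rewrite if_same; exact: mu0P.
rewrite (planted_law_merge_on muFQ _ mA) (planted_law_merge_on mu0P' _ mA).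
exact: (affinely_dominates_pushforward _ _ _ measurable_merge_on _ _
  (affinely_dominates_prodr _ _ _ _ _ e_ge0 K_ge0 PQ) A mA).
Qed.

End merge_on.

Section hidden_clique.
Context {R : realType}.
Local Open Scope ereal_scope.

Lemma is_product_law_tuple {n} {mu : set (Obs R n) -> \bar R}
    {law : Edge n -> set R -> \bar R} :
  is_product_law mu law -> is_tuple_product_law mu (fun i => law (enum_val i)).
Proof.
move=> mu_law A mA; have := mu_law (fun e => A (enum_rank e)) (fun e => mA _).
have -> : [set x : Obs R n | forall e, A (enum_rank e) (Defs.coord x e)] = rect A.
  apply/seteqP; split => x /= xA; last by move=> e; exact: xA.
  by move=> i; have := xA (enum_val i); rewrite /Defs.coord enum_valK.
move=> ->; rewrite (reindex (@enum_val _ {: Edge n})) /=.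
  by apply: eq_bigr => i _; rewrite enum_valK.
exact/onW_bij/enum_val_bij.
Qed.

Definition clique_coords {n} (S : {set 'I_n}) : {set 'I_#|{: Edge n}|} :=
  [set i | in_clique S (enum_val i)].

Lemma card_clique_coords {n} (S : {set 'I_n}) :
  (#|clique_coords S| <= #|S| * #|S|)%N.
Proof.
rewrite -cardsX.
have val_inj : injective (fun i : 'I_#|{: Edge n}| => sval (enum_val i)).
  by move=> i j /val_inj /enum_val_inj.
rewrite -(card_imset _ val_inj).
apply/subset_leq_card/fintype.subsetP => _ /finset.imsetP[i + ->].
rewrite finset.in_set /in_clique => /andP[iS1 iS2].
by rewrite [sval _]surjective_pairing finset.in_setX iS1 iS2.
Qed.

Lemma H1_law_ge n k (muS : {set 'I_n} -> set (Obs R n) -> \bar R) B (c : R) :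
  (k <= n)%N -> (forall S : {set 'I_n}, #|S| == k -> c%:E <= muS S B) ->
  c%:E <= H1_law k muS B.
Proof.
move=> kn cmuS; rewrite /H1_law.
apply: (@le_trans _ _ ('C(n, k)%:R^-1%:E * \sum_(S : {set 'I_n} | #|S| == k) c%:E)).
  rewrite sumEFin -EFinM lee_fin sumr_const.
  rewrite (_ : #|_| = #|[set S : {set 'I_n} | #|S| == k]%SET|); last by rewrite cardsE.
  rewrite card_draws card_ord -[(c *+ _)%R]mulr_natr mulrCA mulVf ?mulr1//.
  by rewrite pnatr_eq0 -lt0n bin_gt0.
by apply: lee_wpmul2l; [rewrite lee_fin invr_ge0|exact: lee_sum].
Qed.

(* Either the test rejects H0 with probability at least eta = 1/(4(K+1)), or
   every planted law puts mass at most 1/4 + K eta = 1/2 on the rejection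
   region. *)
Lemma risk_ge n k (mu0 : {measure set (Obs R n) -> \bar R})
    (muS : {set 'I_n} -> {measure set (Obs R n) -> \bar R}) (K : R)
    (T : Obs R n -> bool) :
  (k <= n)%N -> (0 <= K)%R ->
  (forall S : {set 'I_n}, #|S| == k -> muS S setT = 1) ->
  (forall S : {set 'I_n}, #|S| == k -> affinely_dominates mu0 (muS S) 4^-1 K) ->
  measurable_fun setT T ->
  ((4 * (K + 1))^-1)%:E <= risk k mu0 muS T.
Proof.
move=> kn K_ge0 muS1 mu0muS mT; set eta := ((4 * (K + 1))^-1)%R.
have etaK : ((K + 1) * eta = 4^-1)%R.
  by rewrite /eta invfM mulrCA mulfV ?mulr1// lt0r_neq0// ltr_wpDl.
pose A := T @^-1` [set true].
have mA : measurable A by rewrite -[A]setTI; exact: mT.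
rewrite /risk (_ : T @^-1` [set false] = ~` A); last first.
  by apply/seteqP; split => x /=; rewrite /A /=; case: (T x).
have [etaA|Aeta] := leP eta%:E (mu0 A).
  apply: (le_trans etaA); rewrite leeDl//.
  by apply: (@H1_law_ge _ _ _ _ 0) => // S _; exact: measure_ge0.
apply: (le_trans _ (leeDr _ (measure_ge0 _ _))).
apply: H1_law_ge => // S /[dup] Sk /muS1 muS_1.
have muSA : muS S A <= (1 - eta)%:E.
  apply: (le_trans (mu0muS S Sk A mA)).
  apply: (@le_trans _ _ (4^-1 + K * eta)%:E).
    by rewrite EFinD leeD2l// EFinM lee_wpmul2l ?lee_fin// ltW.
  by rewrite lee_fin -etaK; lra.
have muSA_fin : muS S A \is a fin_num.
  by rewrite ge0_fin_numE// (le_lt_trans muSA) ?ltry.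
have muST_fin : muS S setT < +oo by rewrite muS_1 ltry.
rewrite -setTD measureD ?setTI// (_ : muS S _ - _ = 1 - muS S A); last first.
  by congr (_ - _); exact: muS_1.
rewrite leeBrDr// -(fineK muSA_fin) -EFinD lee_fin.
by rewrite -(fineK muSA_fin) lee_fin in muSA; lra.
Qed.

End hidden_clique.

Section opt_risk_lower_bound.
Context {R : realType} {P Q : probability R R}
  {mu0 : forall n : nat, {measure set (Obs R n) -> \bar R}}
  {muS : forall (n : nat) (S : {set 'I_n}), {measure set (Obs R n) -> \bar R}}.
Hypothesis QP : Q `<< P.
Hypothesis mu0_law : forall n, is_product_law (mu0 n) (fun _ => P).
Hypothesis muS_law : forall n (S : {set 'I_n}),
  is_product_law (muS n S) (fun e => if in_clique S e then Q else P).

Lemma muS_tuple_law n (S : {set 'I_n}) :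
  is_tuple_product_law (muS n S) (fun i => if i \in clique_coords S then Q else P).
Proof.
move=> A mA; rewrite (is_product_law_tuple (muS_law n S))//.
by apply: eq_bigr => i _; rewrite finset.in_set.
Qed.

Lemma opt_risk_ge (M : nat) : exists2 eta : R, 0 < eta &
  forall n k, (k <= n)%N -> (k < M)%N -> (eta%:E <= opt_risk k (mu0 n) (muS n))%E.
Proof.
have [K K_ge0 PQK] := uniform_affinely_dominates_tuple_prob P Q (4^-1 : R) (M * M)
  (dominates_eps_dominates _ _ QP) (ltac:(by rewrite invr_gt0)).
exists (4 * (K + 1))^-1; first by rewrite invr_gt0 mulr_gt0// ltr_wpDl.
move=> n k kn kM; apply: le_ereal_inf_tmp => _ [T [mT ->]].
apply: risk_ge => // S /eqP Sk.
  apply: (is_tuple_product_law_setT (muS_tuple_law n S)) => i.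
  by case: ifP => _; exact: probability_setT.
apply: (affinely_dominates_planted (clique_coords S)) => //.
- exact: (is_product_law_tuple (mu0_law n)).
- exact: muS_tuple_law.
apply: PQK; apply: (leq_trans (card_clique_coords S)).
by rewrite Sk leq_mul// ltnW.
Qed.

End opt_risk_lower_bound.

Theorem mainTheorem2 (R : realType) (P Q : probability R R)
  (mu0 : forall n : nat, {measure set (Obs R n) -> \bar R})
  (muS : forall (n : nat) (S : {set 'I_n}), {measure set (Obs R n) -> \bar R})
  (k : nat -> nat) :
  Q `<< P ->
  (forall n, is_product_law (mu0 n) (fun _ => P)) ->
  (forall n (S : {set 'I_n}),
     is_product_law (muS n S) (fun e => if in_clique S e then Q else P)) ->
  (forall n, (2 <= n)%N -> (2 <= k n <= n)%N) ->
  opt_risk (k n) (mu0 n) (muS n) @[n --> \oo] --> 0%E ->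
  forall M : nat, \forall n \near \oo, (M <= k n)%N.
Proof.
move=> QP mu0_law muS_law k_range risk_cvg0 M.
have [eta eta_gt0 eta_le_risk] := opt_risk_ge QP mu0_law muS_law M.
have risk_lt_eta := risk_cvg0 _ (@nbhs_open_ereal_lt _ 0 (fun=> eta) eta_gt0).
near=> n; rewrite leqNgt; apply/negP => kM.
have /andP[_ kn] : (2 <= k n <= n)%N.
  by apply: k_range; near: n; exact: nbhs_infty_ge.
have : (opt_risk (k n) (mu0 n) (muS n) < eta%:E)%E by near: n; exact: risk_lt_eta.
by rewrite ltNge eta_le_risk.
Unshelve. all: by end_near.
Qed.
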